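(* In $Y_R(\mathfrak{so}_3)$, writing $e_{-1,0}(u)=\sum_{r\ge1}e^{(r)}_{-1,0}u^{-r}$, $$[e^{(1)}_{-1,0},e_{-1,0}(u)]=e_{-1,0}(u)^2-e_{-1,0}(u+\tfrac12)e_{-1,0}(u)-e_{-1,1}(u+\tfrac12).$$
   Context: Let $e_{ij}$ ($i,j\in\{-1,0,1\}$) be the matrix units of $\mathrm{End}\,\mathbb{C}^3$, with rows and columns indexed by $-1,0,1$. Let $P=\sum_{i,j}e_{ij}\otimes e_{ji}$, $Q=\sum_{i,j}e_{ij}\otimes e_{-i,-j}$ and $R(u)=1-\frac{P}{u}+\frac{Q}{u-\frac12}$. Let $t$ be the transposition on $\mathrm{End}\,\mathbb{C}^3$ given by $(e_{ij})^t=e_{-j,-i}$. The algebra $Y_R(\mathfrak{so}_3)$ is the unital associative algebra over $\mathbb{C}$ generated by elements $t_{ij}^{(r)}$, $r\ge 1$, $i,j\in\{-1,0,1\}$; put $t_{ij}(u)=\delta_{ij}+\sum_{r\ge1}t^{(r)}_{ij}u^{-r}$, $T(u)=\sum_{i,j}t_{ij}(u)\otimes e_{ij}$, $T^t(u)=\sum_{i,j}t_{ij}(u)\otimes e_{-j,-i}$, $T_1(u)=\sum t_{ij}(u)\otimes e_{ij}\otimes 1$, $T_2(v)=\sum t_{ij}(v)\otimes 1\otimes e_{ij}$. The defining relations are $R(u-v)T_1(u)T_2(v)=T_2(v)T_1(u)R(u-v)$ and $T(u)T^t(u+\frac12)=T^t(u+\frac12)T(u)=1$. The Gauss generators are the unique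 series $k_i(u)\in 1+u^{-1}Y_R(\mathfrak{so}_3)[[u^{-1}]]$ ($i=-1,0,1$) and $e_{ij}(u),f_{ji}(u)\in u^{-1}Y_R(\mathfrak{so}_3)[[u^{-1}]]$ ($-1\le i<j\le1$) such that $T(u)=F(u)K(u)E(u)$, where $F(u)$ is the lower unitriangular matrix with below-diagonal entries $F_{0,-1}=f_{0,-1}(u)$, $F_{1,-1}=f_{1,-1}(u)$, $F_{1,0}=f_{1,0}(u)$, $K(u)=\mathrm{diag}(k_{-1}(u),k_0(u),k_1(u))$, and $E(u)$ is the upper unitriangular matrix with above-diagonal entries $E_{-1,0}=e_{-1,0}(u)$, $E_{-1,1}=e_{-1,1}(u)$, $E_{0,1}=e_{01}(u)$ (rows/columns indexed by $-1,0,1$). *)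

From HB Require Import structures.
From mathcomp Require Import all_boot all_order all_algebra.
Set Implicit Arguments. Unset Strict Implicit. Unset Printing Implicit Defensive.
Import GRing.Theory.
Local Open Scope ring_scope.

Definition idx3 : seq int := [:: -1; 0; 1].

Section YangianDefs.
Variables (F : fieldType) (A : lalgType F).

(* A formal series  sum_{n >= 0} f n u^{-n}  with coefficients in A. *)
Definition ser := nat -> A.

Definition ser_delta (b : bool) : ser := fun n => if b && (n == 0%N) then 1 else 0.
Definition ser_one : ser := ser_delta true.
Definition ser_zero : ser := fun _ => 0.

Definition ser_mul (f g : ser) : ser :=
  fun n => \sum_(k < n.+1) f k * g (n - k)%N.

(* Substitution u |-> u + c :  (u+c)^{-r} = sum_m (-1)^m C(r+m-1,m) c^m u^{-r-m}. *)
Definition ser_shift (c : F) (f : ser) : ser :=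
  fun n => \sum_(r < n.+1) ((- c) ^+ (n - r) * ('C(n.-1, n - r))%:R) *: f r.

(* t_ij(u) = delta_ij + sum_{r>=1} t_ij^(r) u^{-r}, from t i j r = t_ij^(r)
   (the value t i j 0 is irrelevant). *)
Definition tser (t : int -> int -> nat -> A) (i j : int) : ser :=
  fun n => if n == 0%N then (i == j)%:R else t i j n.

(* Two-variable expressions in A[u,v][[u^{-1},v^{-1}]]:
   f a b = coefficient of u^a v^b. *)
Definition ser2 := int -> int -> A.

(* coefficient of u^a in t_ij(u) *)
Definition tco (t : int -> int -> nat -> A) (i j : int) (a : int) : A :=
  match a with
  | Posz 0 => (i == j)%:R
  | Posz _ => 0
  | Negz m => t i j m.+1
  end.

(* multiplication by (u - v) *)
Definition mul_umv (f : ser2) : ser2 := fun a b => f (a - 1) b - f a (b - 1).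
(* multiplication by (u - v - 1/2) *)
Definition mul_umvh (f : ser2) : ser2 :=
  fun a b => mul_umv f a b - (2%:R^-1 : F) *: f a b.

(* The RTT relation R(u-v)T_1(u)T_2(v) = T_2(v)T_1(u)R(u-v), multiplied by
   (u-v)(u-v-1/2), written entrywise: entry ((i,k),(j,l)) of
   End(C^3 (x) C^3), i.e. coefficient of e_ij (x) e_kl. *)
Definition RTT_rel (t : int -> int -> nat -> A) : Prop :=
  forall i j k l, i \in idx3 -> j \in idx3 -> k \in idx3 -> l \in idx3 ->
  let X  : ser2 := fun a b => tco t i j a * tco t k l b in
  let PX : ser2 := fun a b => tco t k j a * tco t i l b in
  let QX : ser2 := fun a b =>
    (k == - i)%:R * \sum_(c <- idx3) tco t c j a * tco t (- c) l b in
  let Y  : ser2 := fun a b => tco t k l b * tco t i j a in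
  let YP : ser2 := fun a b => tco t k j b * tco t i l a in
  let YQ : ser2 := fun a b =>
    (l == - j)%:R * \sum_(c <- idx3) tco t k (- c) b * tco t i c a in
  forall a b : int,
    mul_umv (mul_umvh X) a b - mul_umvh PX a b + mul_umv QX a b
  = mul_umv (mul_umvh Y) a b - mul_umvh YP a b + mul_umv YQ a b.

(* T(u) T^t(u+1/2) = T^t(u+1/2) T(u) = 1, where (T^t)_{ab} = t_{-b,-a}. *)
Definition unitary_rel (t : int -> int -> nat -> A) : Prop :=
  forall i j, i \in idx3 -> j \in idx3 -> forall n : nat,
    (\sum_(a <- idx3)
       ser_mul (tser t i a) (ser_shift (2%:R^-1) (tser t (- j) (- a))) n
     = ser_delta (i == j) n)
 /\ (\sum_(a <- idx3)
       ser_mul (ser_shift (2%:R^-1) (tser t (- a) (- i))) (tser t a j) n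
     = ser_delta (i == j) n).

(* Gauss decomposition T(u) = F(u) K(u) E(u):
   k a = k_a(u), e a j = e_aj(u) (a < j), f i a = f_ia(u) (a < i). *)
Definition Fmat (f : int -> int -> nat -> A) (i a : int) : ser :=
  if i == a then ser_one else if a < i then f i a else ser_zero.
Definition Emat (e : int -> int -> nat -> A) (a j : int) : ser :=
  if a == j then ser_one else if a < j then e a j else ser_zero.

Definition gauss_decomp (t : int -> int -> nat -> A) (k : int -> nat -> A)
  (e f : int -> int -> nat -> A) : Prop :=
  (forall a, a \in idx3 -> k a 0%N = 1)
  /\ (forall a j, a \in idx3 -> j \in idx3 -> a < j -> e a j 0%N = 0)
  /\ (forall i a, i \in idx3 -> a \in idx3 -> a < i -> f i a 0%N = 0)
  /\ (forall i j, i \in idx3 -> j \in idx3 -> forall n : nat,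
        tser t i j n
        = \sum_(a <- idx3) ser_mul (ser_mul (Fmat f i a) (k a)) (Emat e a j) n).

End YangianDefs.

From HB Require Import structures.
From mathcomp Require Import all_boot all_order all_algebra.
From mathcomp Require Import ring zify.
Import GRing.Theory.
Local Open Scope ring_scope.
Set Implicit Arguments. Unset Strict Implicit.

(* Write k = k_{-1}, e = e_{-1,0} and g = e_{-1,1}.  The first row of the Gauss
   decomposition reads t_{-1,-1} = k, t_{-1,0} = k e, t_{-1,1} = k g.
   1. The coefficients of u^1 of the RTT relation compute the commutators
      [t^(1)_{-1,0}, t_{-1,j}(v)]; as a commutator is a derivation and k(u) is
      invertible, this gives [e^(1), e(u)] = e(u)^2 + g(u).
   2. After multiplication by u^{-2} v^{-2}, the RTT relation involves series in
      u^{-1}, v^{-1} only, and can be evaluated on the diagonal v = u + c; there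
      the R-matrix becomes a scalar combination.  For c = -1 this yields
      g(u) = -1/2 e(u)^2, and for c = 1/2, after cancelling k(u) k(u+1/2),
      3 g(u+1/2) = g(u) - 3 e(u+1/2) e(u) + 2 e(u)^2.
   3. The lemma is a linear combination of these three identities. *)

Section CentralScalars.
Variables (F : fieldType) (A : lalgType F).

(* In a left algebra, scalars are only compatible with the left factor of a
   product; a scalar is central when it also passes through the right one.
   All the scalars we need (rational numbers) are central. *)
Definition central_scalar (a : F) : Prop :=
  forall x y : A, x * (a *: y) = a *: (x * y).

Lemma central_nat n : central_scalar n%:R.
Proof. by move=> x y; rewrite !scaler_nat mulrnAr. Qed.

Lemma central_mul a b :
  central_scalar a -> central_scalar b -> central_scalar (a * b).
Proof. by move=> ha hb x y; rewrite -!scalerA ha hb. Qed.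

Lemma central_opp a : central_scalar a -> central_scalar (- a).
Proof. by move=> ha x y; rewrite !scaleNr mulrN ha. Qed.

Lemma central_exp a m : central_scalar a -> central_scalar (a ^+ m).
Proof.
move=> ha; elim: m => [|m IH]; first by move=> x y; rewrite expr0 !scale1r.
by rewrite exprS; apply: central_mul.
Qed.

Lemma central_invn d : d%:R != 0 :> F -> central_scalar d%:R^-1.
Proof.
move=> hd x y; apply: (can_inj (scalerK hd)).
by rewrite scalerA divff // scale1r -(central_nat d) scalerA divff // scale1r.
Qed.

Lemma central_m1 : central_scalar (-1).
Proof. by move=> x y; rewrite !scaleN1r mulrN. Qed.

End CentralScalars.

Section FormalSeries.
Variables (F : fieldType) (A : lalgType F).
Implicit Types (f g p K x y : ser A).

Lemma ser_mul_extl {f f' g : ser A} {n : nat} :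
  (forall m, f m = f' m) -> ser_mul f g n = ser_mul f' g n.
Proof. by move=> hf; apply: eq_bigr => i _; rewrite hf. Qed.

Lemma ser_mul_extr {f g g' : ser A} {n : nat} :
  (forall m, g m = g' m) -> ser_mul f g n = ser_mul f g' n.
Proof. by move=> hg; apply: eq_bigr => i _; rewrite hg. Qed.

Lemma ser_mul_coef0 f g : ser_mul f g 0 = f 0%N * g 0%N.
Proof. exact: big_ord1. Qed.

Lemma ser_mul1l f n : ser_mul (ser_one A) f n = f n.
Proof.
rewrite /ser_mul big_ord_recl /= subn0 mul1r big1 ?addr0 // => i _.
by rewrite mul0r.
Qed.

Lemma ser_mul1r f n : ser_mul f (ser_one A) n = f n.
Proof.
rewrite /ser_mul big_ord_recr /= subnn mulr1 big1 ?add0r // => i _.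
by rewrite /ser_one /ser_delta /= subn_eq0 leqNgt ltn_ord mulr0.
Qed.

Lemma ser_mul0l f n : ser_mul (ser_zero A) f n = 0.
Proof. by rewrite /ser_mul big1 // => i _; rewrite mul0r. Qed.

Lemma ser_mulDl f f' g n :
  ser_mul (fun m => f m + f' m) g n = ser_mul f g n + ser_mul f' g n.
Proof. by rewrite /ser_mul -big_split; apply: eq_bigr => i _; rewrite mulrDl. Qed.

Lemma ser_mulDr f g g' n :
  ser_mul f (fun m => g m + g' m) n = ser_mul f g n + ser_mul f g' n.
Proof. by rewrite /ser_mul -big_split; apply: eq_bigr => i _; rewrite mulrDr. Qed.

Lemma ser_mulNl f g n : ser_mul (fun m => - f m) g n = - ser_mul f g n.
Proof. by rewrite /ser_mul -sumrN; apply: eq_bigr => i _; rewrite mulNr. Qed.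

Lemma ser_mulNr f g n : ser_mul f (fun m => - g m) n = - ser_mul f g n.
Proof. by rewrite /ser_mul -sumrN; apply: eq_bigr => i _; rewrite mulrN. Qed.

Lemma ser_mulBl f f' g n :
  ser_mul (fun m => f m - f' m) g n = ser_mul f g n - ser_mul f' g n.
Proof. by rewrite ser_mulDl ser_mulNl. Qed.

Lemma ser_mulBr f g g' n :
  ser_mul f (fun m => g m - g' m) n = ser_mul f g n - ser_mul f g' n.
Proof. by rewrite ser_mulDr ser_mulNr. Qed.

Lemma ser_mulZl a f g n : ser_mul (fun m => a *: f m) g n = a *: ser_mul f g n.
Proof. by rewrite /ser_mul scaler_sumr; apply: eq_bigr => i _; rewrite scalerAl. Qed.

Lemma ser_mulZr a f g n : central_scalar A a ->
  ser_mul f (fun m => a *: g m) n = a *: ser_mul f g n.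
Proof. by move=> ha; rewrite /ser_mul scaler_sumr; apply: eq_bigr => i _; rewrite ha. Qed.

(* Associativity is inherited from polynomials: the n-th coefficient of a
   product only involves the truncations of the factors below degree n+1. *)
Definition ser_trunc (N : nat) f : {poly A} := \poly_(i < N) f i.

Lemma ser_mul_trunc N f g n : (n < N)%N ->
  ser_mul f g n = (ser_trunc N f * ser_trunc N g)`_n.
Proof.
move=> hn; rewrite coefM; apply: eq_bigr => i _.
have hi : (i < N)%N by apply: leq_ltn_trans hn; rewrite -ltnS.
have hj : (n - i < N)%N by apply: leq_ltn_trans hn; rewrite leq_subr.
by rewrite !coef_poly hi hj.
Qed.

Lemma coefM_low (p p' q q' : {poly A}) n :
  (forall j, (j <= n)%N -> p`_j = p'`_j) -> (forall j, (j <= n)%N -> q`_j = q'`_j) ->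
  (p * q)`_n = (p' * q')`_n.
Proof.
move=> hp hq; rewrite !coefM; apply: eq_bigr => i _.
by rewrite hp ?hq // ?leq_subr // -ltnS.
Qed.

Lemma ser_mulA f g p n :
  ser_mul (ser_mul f g) p n = ser_mul f (ser_mul g p) n.
Proof.
pose tr := ser_trunc n.+1.
have trunc_mul q q' j : (j <= n)%N -> (tr (ser_mul q q'))`_j = (tr q * tr q')`_j.
  by move=> hj; rewrite coef_poly ltnS hj (@ser_mul_trunc n.+1).
rewrite (@ser_mul_trunc n.+1) // [RHS](@ser_mul_trunc n.+1) //.
rewrite (@coefM_low _ (tr f * tr g) _ (tr p)) //; last exact: trunc_mul.
by rewrite [RHS](@coefM_low _ (tr f) _ (tr g * tr p)) ?mulrA //; exact: trunc_mul.
Qed.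

Lemma ser_mul_eq0 K x : K 0%N = 1 ->
  (forall n, ser_mul K x n = 0) -> forall n, x n = 0.
Proof.
move=> K0 H n; elim: n {-2}n (leqnn n) => [|n IH] m hm.
  by move: hm (H 0%N); rewrite leqn0 => /eqP ->; rewrite ser_mul_coef0 K0 mul1r.
move: (H m); rewrite /ser_mul big_ord_recl K0 mul1r subn0 big1 ?addr0 // => i _.
by rewrite IH ?mulr0 // lift0; lia.
Qed.

Lemma ser_mul_cancel K x y : K 0%N = 1 ->
  (forall n, ser_mul K x n = ser_mul K y n) -> forall n, x n = y n.
Proof.
move=> K0 H n; apply/eqP; rewrite -subr_eq0; apply/eqP.
by apply: (ser_mul_eq0 (x := fun m => x m - y m) K0) => m; rewrite ser_mulBr H subrr.
Qed.

Lemma ser_commutator_mul (z : A) f g n :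
  z * ser_mul f g n - ser_mul f g n * z =
  ser_mul (fun m => z * f m - f m * z) g n + ser_mul f (fun m => z * g m - g m * z) n.
Proof.
rewrite /ser_mul mulr_sumr mulr_suml -sumrB -big_split; apply: eq_bigr => i _ /=.
by rewrite mulrBl mulrBr !mulrA addrA subrK.
Qed.

End FormalSeries.

Section Shift.
Variables (F : fieldType) (A : lalgType F).
Implicit Types (f g q : ser A).

(* [ser_uinv q] is u^{-1} q(u) and [ser_const x] the constant series x. *)
Definition ser_uinv q : ser A := fun i => if i is i'.+1 then q i' else 0.
Definition ser_const (x : A) : ser A := fun m => if m is 0 then x else 0.

Lemma ser_shift_ext c f g n :
  (forall m, f m = g m) -> ser_shift c f n = ser_shift c g n.
Proof. by move=> h; apply: eq_bigr => i _; rewrite h. Qed.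

Lemma ser_shiftD c f g n :
  ser_shift c (fun s => f s + g s) n = ser_shift c f n + ser_shift c g n.
Proof. by rewrite /ser_shift -big_split; apply: eq_bigr => i _; rewrite scalerDr. Qed.

Lemma ser_shiftN c f n : ser_shift c (fun s => - f s) n = - ser_shift c f n.
Proof. by rewrite /ser_shift -sumrN; apply: eq_bigr => i _; rewrite scalerN. Qed.

Lemma ser_shift_mulr c f x n :
  ser_shift c (fun s => f s * x) n = ser_shift c f n * x.
Proof. by rewrite /ser_shift mulr_suml; apply: eq_bigr => i _; rewrite scalerAl. Qed.

Lemma ser_shift_mull c f x n : central_scalar A c ->
  ser_shift c (fun s => x * f s) n = x * ser_shift c f n.
Proof.
move=> hc; rewrite /ser_shift mulr_sumr; apply: eq_bigr => i _.
by rewrite (central_mul (central_exp _ (central_opp hc)) (@central_nat _ A _)).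
Qed.

Lemma ser_shift_coef0 c f : ser_shift c f 0 = f 0%N.
Proof. by rewrite /ser_shift big_ord1 /= expr0 mul1r scale1r. Qed.

Lemma ser_shift_const c x n : ser_shift c (ser_const x) n = ser_const x n.
Proof.
rewrite /ser_shift big_ord_recl /= subn0; case: n => [|n] /=.
  by rewrite big_ord0 expr0 mul1r scale1r addr0.
by rewrite bin_small // mulr0 scale0r add0r big1 // => i _; rewrite scaler0.
Qed.

Lemma ser_shift_uinv0 c q : ser_shift c (ser_uinv q) 0 = 0.
Proof. by rewrite ser_shift_coef0. Qed.

(* Shifting u^{-1} q(u) gives (u+c)^{-1} q(u+c); the recurrence expresses
   u (u+c)^{-1} = 1 - c (u+c)^{-1}, i.e. Pascal's rule for the coefficients. *)
Lemma ser_shift_uinv c q n :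
  ser_shift c (ser_uinv q) n.+1 + c *: ser_shift c (ser_uinv q) n = ser_shift c q n.
Proof.
rewrite /ser_shift big_ord_recl /= scaler0 add0r.
case: n => [|n]; first by rewrite !big_ord1 /= !scaler0 addr0.
rewrite [X in c *: X]big_ord_recl /= scaler0 add0r.
rewrite big_ord_recr /= [RHS]big_ord_recr /= !subnn !bin0 addrAC.
congr (_ + _); rewrite scaler_sumr -big_split /=; apply: eq_bigr => i _.
rewrite !subSS scalerA -scalerDl; congr (_ *: _).
have hi : (i <= n)%N by rewrite -ltnS.
by rewrite (subSn hi) binS exprS natrD mulrDr; ring.
Qed.

Lemma ser_mul_split f g m :
  ser_mul f g m = f 0%N * g m + ser_uinv (ser_mul (fun i => f i.+1) g) m.
Proof.
rewrite /ser_mul big_ord_recl /= subn0; case: m => [|m] /=; first by rewrite big_ord0 addr0.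
by congr (_ + _); apply: eq_bigr => i _; rewrite subSS.
Qed.

Lemma ser_uinv_mul f g m : ser_uinv (ser_mul f g) m = ser_mul (ser_uinv f) g m.
Proof.
case: m => [|m]; first by rewrite ser_mul_coef0 mul0r.
by rewrite /ser_mul big_ord_recl /= mul0r add0r; apply: eq_bigr => i _; rewrite subSS.
Qed.

Lemma ser_shift_uinvS c q n :
  ser_shift c (ser_uinv q) n.+1 = ser_shift c q n - c *: ser_shift c (ser_uinv q) n.
Proof. by rewrite -(ser_shift_uinv c q n) addrK. Qed.

Lemma ser_shiftM c f g n : central_scalar A c ->
  ser_shift c (ser_mul f g) n = ser_mul (ser_shift c f) (ser_shift c g) n.
Proof.
move=> hc; elim: n f g => [|n IH] f g.
  by rewrite ser_shift_coef0 !ser_mul_coef0 !ser_shift_coef0.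
pose tl := fun i => f i.+1.
have f_split m : f m = ser_const (f 0%N) m + ser_uinv tl m.
  by case: m => [|m] /=; rewrite ?addr0 ?add0r.
have shf m : ser_shift c f m = ser_const (f 0%N) m + ser_shift c (ser_uinv tl) m.
  by rewrite (ser_shift_ext _ _ f_split) ser_shiftD ser_shift_const.
rewrite (ser_shift_ext _ _ (ser_mul_split f g)) ser_shiftD ser_shift_mull //.
rewrite (ser_mul_extl shf) ser_mulDl; congr (_ + _).
  rewrite /ser_mul big_ord_recl /= subn0 big1 ?addr0 // => i _.
  by rewrite mul0r.
rewrite ser_shift_uinvS /ser_mul big_ord_recl /= ser_shift_uinv0 mul0r add0r.
under eq_bigr => i _ do rewrite subSS ser_shift_uinvS mulrBl -scalerAl.
rewrite sumrB -scaler_sumr; congr (_ - c *: _); first exact: IH.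
rewrite (ser_shift_ext _ _ (ser_uinv_mul tl g)); exact: IH.
Qed.

End Shift.

Section DiagonalEvaluation.
Variables (F : fieldType) (A : lalgType F).
Implicit Types (G H : nat -> nat -> A) (p q : ser A).

(* A two-variable series  sum_{r,s} G r s u^{-r} v^{-s}  evaluated on the
   diagonal v = u + c, as a series in u^{-1}. *)
Definition diag_eval (c : F) G : ser A :=
  fun n => \sum_(r < n.+1) ser_shift c (G r) (n - r)%N.

(* The coefficient array of u^{-a} v^{-b} G. *)
Definition mulmono (a b : nat) G : nat -> nat -> A :=
  fun r s => if (a <= r)%N && (b <= s)%N then G (r - a)%N (s - b)%N else 0.

Lemma diag_eval_ext c G H n :
  (forall r s, G r s = H r s) -> diag_eval c G n = diag_eval c H n.
Proof. by move=> h; apply: eq_bigr => i _; apply: ser_shift_ext. Qed.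

Lemma diag_eval_eq0 c G n : (forall r s, G r s = 0) -> diag_eval c G n = 0.
Proof.
move=> h; rewrite /diag_eval big1 // => i _; rewrite /ser_shift big1 // => j _.
by rewrite h scaler0.
Qed.

Lemma diag_evalD c G H n :
  diag_eval c (fun r s => G r s + H r s) n = diag_eval c G n + diag_eval c H n.
Proof. by rewrite /diag_eval -big_split; apply: eq_bigr => i _; rewrite ser_shiftD. Qed.

Lemma diag_evalN c G n : diag_eval c (fun r s => - G r s) n = - diag_eval c G n.
Proof. by rewrite /diag_eval -sumrN; apply: eq_bigr => i _; rewrite ser_shiftN. Qed.

Lemma diag_evalB c G H n :
  diag_eval c (fun r s => G r s - H r s) n = diag_eval c G n - diag_eval c H n.
Proof. by rewrite diag_evalD diag_evalN. Qed.

Lemma diag_evalZ c a G n :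
  diag_eval c (fun r s => a *: G r s) n = a *: diag_eval c G n.
Proof.
rewrite /diag_eval scaler_sumr; apply: eq_bigr => i _.
by rewrite /ser_shift scaler_sumr; apply: eq_bigr => j _; rewrite !scalerA mulrC.
Qed.

Lemma diag_eval_mull c x G n : central_scalar A c ->
  diag_eval c (fun r s => x * G r s) n = x * diag_eval c G n.
Proof.
by move=> hc; rewrite /diag_eval mulr_sumr; apply: eq_bigr => i _; rewrite ser_shift_mull.
Qed.

Lemma diag_eval_sum c (I : Type) (l : seq I) (G : I -> nat -> nat -> A) n :
  diag_eval c (fun r s => \sum_(i <- l) G i r s) n = \sum_(i <- l) diag_eval c (G i) n.
Proof.
elim: l => [|x l IH]; first by rewrite big_nil diag_eval_eq0 // => r s; rewrite big_nil.
by rewrite big_cons -IH -diag_evalD; apply: diag_eval_ext => r s; rewrite big_cons.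
Qed.

Lemma diag_eval_mul c p q n : central_scalar A c ->
  diag_eval c (fun r s => p r * q s) n = ser_mul p (ser_shift c q) n.
Proof. by move=> hc; apply: eq_bigr => i _; rewrite ser_shift_mull. Qed.

Lemma diag_eval_mulC c p q n :
  diag_eval c (fun r s => q s * p r) n = ser_mul (ser_shift c q) p n.
Proof.
rewrite /diag_eval /ser_mul (reindex_inj rev_ord_inj) /=; apply: eq_bigr => i _.
by rewrite ser_shift_mulr subKn // -ltnS.
Qed.

Lemma diag_eval_mul_sum c (I : Type) (l : seq I) x (p q : I -> ser A) n :
  central_scalar A c ->
  diag_eval c (fun r s => x * \sum_(i <- l) p i r * q i s) n
  = x * \sum_(i <- l) ser_mul (p i) (ser_shift c (q i)) n.
Proof.
move=> hc; rewrite diag_eval_mull // diag_eval_sum.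
by congr (_ * _); apply: eq_bigr => i _; rewrite diag_eval_mul.
Qed.

Lemma diag_eval_mulC_sum c (I : Type) (l : seq I) x (p q : I -> ser A) n :
  central_scalar A c ->
  diag_eval c (fun r s => x * \sum_(i <- l) q i s * p i r) n
  = x * \sum_(i <- l) ser_mul (ser_shift c (q i)) (p i) n.
Proof.
move=> hc; rewrite diag_eval_mull // diag_eval_sum.
by congr (_ * _); apply: eq_bigr => i _; rewrite diag_eval_mulC.
Qed.

Lemma mulmono00 G r s : mulmono 0 0 G r s = G r s.
Proof. by rewrite /mulmono !subn0. Qed.

Lemma diag_eval_mulmono_u c a b G n :
  diag_eval c (mulmono a.+1 b G) n.+1 = diag_eval c (mulmono a b G) n.
Proof.
rewrite /diag_eval big_ord_recl /= [X in X + _](_ : _ = 0) ?add0r; last first.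
  by rewrite /ser_shift big1 // => i _; rewrite /mulmono /= scaler0.
apply: eq_bigr => i _; rewrite subSS; apply: ser_shift_ext => m.
by rewrite /mulmono /bump /= add1n ltnS subSS.
Qed.

(* A factor v^{-1} = (u+c)^{-1} on the diagonal: u (u+c)^{-1} = 1 - c (u+c)^{-1}. *)
Lemma diag_eval_mulmono_v c b G n :
  diag_eval c (mulmono 0 b.+1 G) n.+1 + c *: diag_eval c (mulmono 0 b.+1 G) n
  = diag_eval c (mulmono 0 b G) n.
Proof.
have uinvE r : forall m, mulmono 0 b.+1 G r m = ser_uinv (mulmono 0 b G r) m.
  by case=> [|m]; rewrite /mulmono ?andbF.
rewrite /diag_eval big_ord_recr /= subnn (ser_shift_ext _ _ (uinvE _)).
rewrite ser_shift_uinv0 addr0 scaler_sumr -big_split /=; apply: eq_bigr => i _.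
rewrite (subSn (ltnSE (ltn_ord i))) !(ser_shift_ext _ _ (uinvE _)).
exact: ser_shift_uinv.
Qed.

Lemma diag_eval_vanish c G :
  (forall m, diag_eval c (mulmono 0 2 G) m = 0) -> forall n, diag_eval c G n = 0.
Proof.
have step b : (forall m, diag_eval c (mulmono 0 b.+1 G) m = 0) ->
    forall m, diag_eval c (mulmono 0 b G) m = 0.
  by move=> hb m; rewrite -diag_eval_mulmono_v !hb scaler0 addr0.
move=> h2 n; rewrite -(diag_eval_ext _ _ (mulmono00 G)).
exact: (step 0%N (step 1%N h2)).
Qed.

End DiagonalEvaluation.

Section LinearCombinations.
Variables (F : fieldType) (V : lmodType F).

(* Identities between F-linear combinations of at most six vectors reduce to
   identities between their coefficients; [lincomb6] is the normal form used
   by the tactic [lincomb_eq] below. *)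
Definition lincomb6 (x1 x2 x3 x4 x5 x6 : V) (a1 a2 a3 a4 a5 a6 : F) : V :=
  \sum_(i < 6) [:: a1; a2; a3; a4; a5; a6]`_i *: [:: x1; x2; x3; x4; x5; x6]`_i.

Lemma lincomb6D x1 x2 x3 x4 x5 x6 a1 a2 a3 a4 a5 a6 b1 b2 b3 b4 b5 b6 :
  lincomb6 x1 x2 x3 x4 x5 x6 a1 a2 a3 a4 a5 a6
  + lincomb6 x1 x2 x3 x4 x5 x6 b1 b2 b3 b4 b5 b6
  = lincomb6 x1 x2 x3 x4 x5 x6
      (a1 + b1) (a2 + b2) (a3 + b3) (a4 + b4) (a5 + b5) (a6 + b6).
Proof.
rewrite /lincomb6 -big_split; apply: eq_bigr => -[i hi] _ /=.
by rewrite -scalerDl; case: i hi => [|[|[|[|[|[|i]]]]]].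
Qed.

Lemma lincomb6Z x1 x2 x3 x4 x5 x6 k a1 a2 a3 a4 a5 a6 :
  k *: lincomb6 x1 x2 x3 x4 x5 x6 a1 a2 a3 a4 a5 a6
  = lincomb6 x1 x2 x3 x4 x5 x6 (k * a1) (k * a2) (k * a3) (k * a4) (k * a5) (k * a6).
Proof.
rewrite /lincomb6 scaler_sumr; apply: eq_bigr => -[i hi] _ /=.
by rewrite scalerA; case: i hi => [|[|[|[|[|[|i]]]]]].
Qed.

Lemma lincomb6N x1 x2 x3 x4 x5 x6 a1 a2 a3 a4 a5 a6 :
  - lincomb6 x1 x2 x3 x4 x5 x6 a1 a2 a3 a4 a5 a6
  = lincomb6 x1 x2 x3 x4 x5 x6 (- a1) (- a2) (- a3) (- a4) (- a5) (- a6).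
Proof. by rewrite -scaleN1r lincomb6Z !mulN1r. Qed.

Lemma lincomb6E x1 x2 x3 x4 x5 x6 a1 a2 a3 a4 a5 a6 :
  lincomb6 x1 x2 x3 x4 x5 x6 a1 a2 a3 a4 a5 a6
  = a1 *: x1 + a2 *: x2 + a3 *: x3 + a4 *: x4 + a5 *: x5 + a6 *: x6.
Proof. by rewrite /lincomb6 !big_ord_recr big_ord0 /= add0r. Qed.

Lemma lincomb6_zero x1 x2 x3 x4 x5 x6 : lincomb6 x1 x2 x3 x4 x5 x6 0 0 0 0 0 0 = 0.
Proof. by rewrite lincomb6E !scale0r !addr0. Qed.

Lemma eq_of_scaled (a : F) (x z : V) : x = 0 -> z = a *: x -> z = 0.
Proof. by move=> -> ->; rewrite scaler0. Qed.

Lemma eq_of_scaled_comb (a b : F) (x y z : V) :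
  x = 0 -> y = 0 -> z = a *: x + b *: y -> z = 0.
Proof. by move=> -> -> ->; rewrite !scaler0 addr0. Qed.

End LinearCombinations.

(* [lincomb_eq x1 .. x6] proves an equation between linear combinations of
   the vectors x1, .., x6 (repeat a vector to fill unused slots), leaving the
   equalities of coefficients, to be closed by [ring] or [field]. *)
Ltac lincomb_eq x1 x2 x3 x4 x5 x6 :=
  let p := fresh "p" in
  let h1 := fresh "h" in let h2 := fresh "h" in let h3 := fresh "h" in
  let h4 := fresh "h" in let h5 := fresh "h" in let h6 := fresh "h" in
  pose p := lincomb6 x1 x2 x3 x4 x5 x6;
  (have h1 : x1 = p 1 0 0 0 0 0 by rewrite /p lincomb6E !scale0r scale1r !addr0);
  (have h2 : x2 = p 0 1 0 0 0 0 by rewrite /p lincomb6E !scale0r scale1r !addr0 add0r);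
  (have h3 : x3 = p 0 0 1 0 0 0 by rewrite /p lincomb6E !scale0r scale1r !addr0 !add0r);
  (have h4 : x4 = p 0 0 0 1 0 0 by rewrite /p lincomb6E !scale0r scale1r !addr0 !add0r);
  (have h5 : x5 = p 0 0 0 0 1 0 by rewrite /p lincomb6E !scale0r scale1r !addr0 !add0r);
  (have h6 : x6 = p 0 0 0 0 0 1 by rewrite /p lincomb6E !scale0r scale1r !add0r);
  rewrite ?(add0r, addr0, sub0r, subr0, scaler0);
  rewrite ?[x1]h1 ?[x2]h2 ?[x3]h3 ?[x4]h4 ?[x5]h5 ?[x6]h6
    -?(lincomb6_zero x1 x2 x3 x4 x5 x6);
  rewrite /p !(lincomb6D, lincomb6Z, lincomb6N);
  clear h1 h2 h3 h4 h5 h6 p;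
  congr (lincomb6 _ _ _ _ _ _ _ _ _ _ _ _).

Section RTTFactors.
Variables (F : fieldType) (A : lalgType F).
Implicit Type G : nat -> nat -> A.
Local Notation h := (2%:R^-1 : F).

(* Coefficient arrays of u^{-2}v^{-2}(u-v)(u-v-1/2) G, of u^{-2}v^{-2}(u-v-1/2) G
   and of u^{-2}v^{-2}(u-v) G: the scalar factors of the RTT relation, brought
   to nonnegative powers of u^{-1} and v^{-1}. *)
Definition nmul_umv_umvh G : nat -> nat -> A := fun r s =>
  (mulmono 0 2 G r s - mulmono 1 1 G r s - h *: mulmono 1 2 G r s)
  - (mulmono 1 1 G r s - mulmono 2 0 G r s - h *: mulmono 2 1 G r s).
Definition nmul_umvh G : nat -> nat -> A := fun r s =>
  (mulmono 1 2 G r s - mulmono 2 1 G r s) - h *: mulmono 2 2 G r s.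
Definition nmul_umv G : nat -> nat -> A := fun r s =>
  mulmono 1 2 G r s - mulmono 2 1 G r s.

Lemma diag_nmul_umv_umvh c G n :
  diag_eval c (nmul_umv_umvh G) n.+2 = (c * (c + h)) *: diag_eval c (mulmono 0 2 G) n.
Proof.
rewrite /nmul_umv_umvh !diag_evalB !diag_evalZ !diag_eval_mulmono_u.
rewrite -(diag_eval_mulmono_v c 0 G n) -(diag_eval_mulmono_v c 1 G n.+1).
rewrite -(diag_eval_mulmono_v c 1 G n).
set x := diag_eval c (mulmono 0 2 G).
by lincomb_eq (x n.+2) (x n.+1) (x n) (x n) (x n) (x n); ring.
Qed.

Lemma diag_nmul_umvh c G n :
  diag_eval c (nmul_umvh G) n.+2 = - (c + h) *: diag_eval c (mulmono 0 2 G) n.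
Proof.
rewrite /nmul_umvh !diag_evalB !diag_evalZ !diag_eval_mulmono_u.
rewrite -(diag_eval_mulmono_v c 1 G n).
set x := diag_eval c (mulmono 0 2 G).
by lincomb_eq (x n.+1) (x n) (x n) (x n) (x n) (x n); ring.
Qed.

Lemma diag_nmul_umv c G n :
  diag_eval c (nmul_umv G) n.+2 = - c *: diag_eval c (mulmono 0 2 G) n.
Proof.
rewrite /nmul_umv !diag_evalB !diag_eval_mulmono_u -(diag_eval_mulmono_v c 1 G n).
set x := diag_eval c (mulmono 0 2 G).
by lincomb_eq (x n.+1) (x n) (x n) (x n) (x n) (x n); ring.
Qed.

End RTTFactors.

Section RTTCoefficients.
Variables (F : fieldType) (A : lalgType F) (t : int -> int -> nat -> A).
Local Notation T := (tser t).

Lemma tco_sub i j (a r : nat) :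
  tco t i j (a%:Z - r%:Z) = if (a <= r)%N then T i j (r - a)%N else 0.
Proof.
case: leqP => har.
  by rewrite -opprB subzn //; case: (r - a)%N.
rewrite -(subnK (ltnW har)) PoszD addrK.
by move: har; rewrite -subn_gt0; case: (a - r)%N.
Qed.

Lemma tco_mul i j k l (a b r s : nat) :
  tco t i j (a%:Z - r%:Z) * tco t k l (b%:Z - s%:Z)
  = mulmono a b (fun r s => T i j r * T k l s) r s.
Proof.
by rewrite /mulmono !tco_sub; case: (a <= r)%N; case: (b <= s)%N; rewrite ?mulr0 ?mul0r.
Qed.

Lemma tco_mulC i j k l (a b r s : nat) :
  tco t k l (b%:Z - s%:Z) * tco t i j (a%:Z - r%:Z)
  = mulmono a b (fun r s => T k l s * T i j r) r s.
Proof. by rewrite tco_mul /mulmono andbC. Qed.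

Lemma tco_mul_sum (x : A) (f1 f2 f3 f4 : int -> int) (a b r s : nat) :
  x * \sum_(c <- idx3) tco t (f1 c) (f2 c) (a%:Z - r%:Z) * tco t (f3 c) (f4 c) (b%:Z - s%:Z)
  = mulmono a b (fun r s => x * \sum_(c <- idx3) T (f1 c) (f2 c) r * T (f3 c) (f4 c) s) r s.
Proof.
under eq_bigr do rewrite tco_mul.
by rewrite /mulmono; case: ifP => // _; rewrite big1 ?mulr0.
Qed.

Lemma tco_mul_sumC (x : A) (f1 f2 f3 f4 : int -> int) (a b r s : nat) :
  x * \sum_(c <- idx3) tco t (f3 c) (f4 c) (b%:Z - s%:Z) * tco t (f1 c) (f2 c) (a%:Z - r%:Z)
  = mulmono a b (fun r s => x * \sum_(c <- idx3) T (f3 c) (f4 c) s * T (f1 c) (f2 c) r) r s.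
Proof.
under eq_bigr do rewrite tco_mulC.
by rewrite /mulmono; case: ifP => // _; rewrite big1 ?mulr0.
Qed.

(* The six terms of the entry ((i,k),(j,l)) of the RTT relation:
   R(u-v) T_1(u) T_2(v) (identity, P and Q parts) and T_2(v) T_1(u) R(u-v). *)
Definition TT (i j k l : int) : nat -> nat -> A := fun r s => T i j r * T k l s.
Definition PTT (i j k l : int) : nat -> nat -> A := fun r s => T k j r * T i l s.
Definition QTT (i j k l : int) : nat -> nat -> A := fun r s =>
  (k == - i)%:R * \sum_(c <- idx3) T c j r * T (- c) l s.
Definition TTr (i j k l : int) : nat -> nat -> A := fun r s => T k l s * T i j r.
Definition TTP (i j k l : int) : nat -> nat -> A := fun r s => T k j s * T i l r.
Definition TTQ (i j k l : int) : nat -> nat -> A := fun r s =>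
  (l == - j)%:R * \sum_(c <- idx3) T k (- c) s * T i c r.

(* The RTT relation, multiplied by u^{-2} v^{-2}, in nonnegative indices. *)
Lemma rtt_nat : RTT_rel t ->
  forall i j k l, i \in idx3 -> j \in idx3 -> k \in idx3 -> l \in idx3 ->
  forall r s : nat,
  nmul_umv_umvh (TT i j k l) r s - nmul_umvh (PTT i j k l) r s + nmul_umv (QTT i j k l) r s
  = nmul_umv_umvh (TTr i j k l) r s - nmul_umvh (TTP i j k l) r s + nmul_umv (TTQ i j k l) r s.
Proof.
move=> H i j k l hi hj hk hl r s.
have pred_sub (a x : nat) : (a.+1%:Z - x%:Z) - 1 = a%:Z - x%:Z.
  by rewrite -[a.+1]addn1 PoszD addrAC addrK.
move: (H i j k l hi hj hk hl (2%:Z - r%:Z) (2%:Z - s%:Z)).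
rewrite /mul_umvh /mul_umv /= !pred_sub.
rewrite ![in X in X = _ -> _]tco_mul_sum ![in X in _ = X -> _]tco_mul_sumC.
by rewrite ![in X in X = _ -> _]tco_mul ![in X in _ = X -> _]tco_mulC.
Qed.

End RTTCoefficients.

Section RTTCombination.
Variables (F : fieldType) (A : lalgType F).
Local Notation h := (2%:R^-1 : F).

Lemma diag_eval_eq3 c n (G1 G2 G3 G4 G5 G6 : nat -> nat -> A) :
  (forall r s, G1 r s - G2 r s + G3 r s = G4 r s - G5 r s + G6 r s) ->
  diag_eval c G1 n - diag_eval c G2 n + diag_eval c G3 n
  = diag_eval c G4 n - diag_eval c G5 n + diag_eval c G6 n.
Proof. by move=> eqG; rewrite -!diag_evalB -!diag_evalD; apply: diag_eval_ext. Qed.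

(* The combination of the six terms of an entry of the RTT relation obtained
   on the diagonal v = u + c, where the scalar factors of the relation become
   c (c + 1/2), -(c + 1/2) and -c. *)
Definition rtt_comb (c : F) (X P Q X' P' Q' : nat -> nat -> A) : nat -> nat -> A := fun r s =>
  (c * (c + h)) *: (X r s - X' r s) + (c + h) *: (P r s - P' r s)
  - c *: (Q r s - Q' r s).

Lemma mulmono_rtt_comb c a b (X P Q X' P' Q' : nat -> nat -> A) r s :
  mulmono a b (rtt_comb c X P Q X' P' Q') r s
  = rtt_comb c (mulmono a b X) (mulmono a b P) (mulmono a b Q)
      (mulmono a b X') (mulmono a b P') (mulmono a b Q') r s.
Proof. by rewrite /mulmono /rtt_comb; case: ifP; rewrite ?subrr ?scaler0 ?addr0 ?subr0. Qed.

Lemma diag_eval_rtt_comb c (X P Q X' P' Q' : nat -> nat -> A) n :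
  diag_eval c (rtt_comb c X P Q X' P' Q') n
  = (c * (c + h)) *: (diag_eval c X n - diag_eval c X' n)
    + (c + h) *: (diag_eval c P n - diag_eval c P' n)
    - c *: (diag_eval c Q n - diag_eval c Q' n).
Proof. by rewrite /rtt_comb diag_evalB diag_evalD !diag_evalZ !diag_evalB. Qed.

Lemma diag_rtt_comb_vanish c (X P Q X' P' Q' : nat -> nat -> A) :
  (forall r s, nmul_umv_umvh X r s - nmul_umvh P r s + nmul_umv Q r s
             = nmul_umv_umvh X' r s - nmul_umvh P' r s + nmul_umv Q' r s) ->
  forall n, diag_eval c (rtt_comb c X P Q X' P' Q') n = 0.
Proof.
move=> rel; apply: diag_eval_vanish => m.
have := diag_eval_eq3 c m.+2 rel.
rewrite !diag_nmul_umv_umvh !diag_nmul_umvh !diag_nmul_umv => /eqP; rewrite -subr_eq0 => /eqP.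
rewrite (diag_eval_ext _ _ (mulmono_rtt_comb c 0 2 X P Q X' P' Q')) diag_eval_rtt_comb.
set x := diag_eval c (mulmono 0 2 X) m; set x' := diag_eval c (mulmono 0 2 X') m.
set p := diag_eval c (mulmono 0 2 P) m; set p' := diag_eval c (mulmono 0 2 P') m.
set q := diag_eval c (mulmono 0 2 Q) m; set q' := diag_eval c (mulmono 0 2 Q') m.
by move=> <-; lincomb_eq x x' p p' q q'; ring.
Qed.

End RTTCombination.

Section RTTSpecialized.
Variables (F : fieldType) (A : lalgType F) (t : int -> int -> nat -> A).
Hypothesis HR : RTT_rel t.
Local Notation h := (2%:R^-1 : F).
Local Notation T := (tser t).

Lemma rtt_diag c : central_scalar A c ->
  forall i j k l, i \in idx3 -> j \in idx3 -> k \in idx3 -> l \in idx3 -> forall n,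
  (c * (c + h)) *: (ser_mul (T i j) (ser_shift c (T k l)) n
                    - ser_mul (ser_shift c (T k l)) (T i j) n)
  + (c + h) *: (ser_mul (T k j) (ser_shift c (T i l)) n
                - ser_mul (ser_shift c (T k j)) (T i l) n)
  - c *: ((k == - i)%:R * \sum_(a <- idx3) ser_mul (T a j) (ser_shift c (T (- a) l)) n
          - (l == - j)%:R * \sum_(a <- idx3) ser_mul (ser_shift c (T k (- a))) (T i a) n)
  = 0.
Proof.
move=> hc i j k l hi hj hk hl n.
rewrite -[RHS](diag_rtt_comb_vanish c (rtt_nat HR hi hj hk hl) n) diag_eval_rtt_comb.
rewrite /TT /PTT /QTT /TTr /TTP /TTQ !diag_eval_mul_sum // !diag_eval_mulC_sum //.
by rewrite !diag_eval_mul // !diag_eval_mulC.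
Qed.

End RTTSpecialized.

Section FirstRow.
Variables (F : fieldType) (A : lalgType F).
Hypothesis charF0 : [pchar F] =i pred0.
Variables (t : int -> int -> nat -> A) (k : int -> nat -> A) (e f : int -> int -> nat -> A).
Hypotheses (HR : RTT_rel t) (HG : gauss_decomp t k e f).

Local Notation h := (2%:R^-1 : F).
Local Notation sh := (ser_shift h).
Local Notation T := (tser t).
Local Notation K := (k (-1)).
Local Notation E := (e (-1) 0).
Local Notation G := (e (-1) 1).
Local Notation T11 := (T (-1) (-1)).
Local Notation T12 := (T (-1) 0).
Local Notation T13 := (T (-1) 1).

Lemma nat2_neq0 : (2%:R : F) != 0. Proof. by move/pcharf0P: charF0 => ->. Qed.
Lemma nat3_neq0 : (3%:R : F) != 0. Proof. by move/pcharf0P: charF0 => ->. Qed.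

Lemma central_half : central_scalar A h.
Proof. exact: central_invn nat2_neq0. Qed.

Lemma gauss_first_row j : j \in idx3 ->
  forall n, T (-1) j n = ser_mul K (Emat e (-1) j) n.
Proof.
move=> hj n; case: HG => _ [_ [_ decomp]]; rewrite decomp // /idx3 !big_cons big_nil.
rewrite /Fmat /= (ser_mul_extl (ser_mul1l K)) !(ser_mul_extl (ser_mul0l _)).
by rewrite !ser_mul0l !addr0.
Qed.

Lemma T11E n : T11 n = K n.
Proof. by rewrite gauss_first_row // ser_mul1r. Qed.

Lemma T12E n : T12 n = ser_mul K E n.
Proof. exact: gauss_first_row. Qed.

Lemma T13E n : T13 n = ser_mul K G n.
Proof. exact: gauss_first_row. Qed.

Lemma K_coef0 : K 0%N = 1.
Proof. by case: HG => [-> //]. Qed.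

Lemma E_coef0 : E 0%N = 0.
Proof. by case: HG => _ [-> //]. Qed.

Lemma E_coef1 : E 1%N = t (-1) 0 1%N.
Proof.
have := T12E 1; rewrite /tser /= => ->.
by rewrite /ser_mul big_ord_recr big_ord1 /= K_coef0 E_coef0 mul1r mulr0 addr0.
Qed.

Lemma shT11E n : sh T11 n = sh K n.
Proof. exact: ser_shift_ext T11E. Qed.

Lemma shT12E n : sh T12 n = ser_mul (sh K) (sh E) n.
Proof.
rewrite -ser_shiftM; last exact: central_half.
by apply: ser_shift_ext => m; rewrite T12E.
Qed.

Lemma shT13E n : sh T13 n = ser_mul (sh K) (sh G) n.
Proof.
rewrite -ser_shiftM; last exact: central_half.
by apply: ser_shift_ext => m; rewrite T13E.
Qed.

(* The coefficient of u^1 v^{-m} of the RTT relation gives the commutators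
   of t^{(1)}_{-1,0} with the first row: [t^{(1)}_{-1,0}, t_{-1,-1}(v)] = - t_{-1,0}(v)
   and [t^{(1)}_{-1,0}, t_{-1,0}(v)] = t_{-1,1}(v). *)
Lemma commutator_t1_T11 m :
  t (-1) 0 1%N * T11 m - T11 m * t (-1) 0 1%N = - T12 m.
Proof.
have := @rtt_nat _ _ _ HR (-1) 0 (-1) (-1) erefl erefl erefl erefl 1 m.+2.
rewrite /nmul_umv_umvh /nmul_umvh /nmul_umv /mulmono /TT /PTT /QTT /TTr /TTP /TTQ.
rewrite /= ?subSS ?subn0 ?subnn /tser /=.
rewrite !(mul0r, mulr0, scaler0, subr0, sub0r, mulr1, addr0, oppr0) => ->.
by rewrite addrAC subrr add0r.
Qed.

Lemma commutator_t1_T12 m :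
  t (-1) 0 1%N * T12 m - T12 m * t (-1) 0 1%N = T13 m.
Proof.
have := @rtt_nat _ _ _ HR (-1) 0 (-1) 0 erefl erefl erefl erefl 1 m.+2.
rewrite /nmul_umv_umvh /nmul_umvh /nmul_umv /mulmono /TT /PTT /QTT /TTr /TTP /TTQ.
rewrite /= ?subSS ?subn0 ?subnn /idx3 !big_cons !big_nil /tser /=.
rewrite !(mul0r, mulr0, scaler0, subr0, sub0r, mulr1, mul1r, addr0, oppr0) => ->.
by rewrite addrAC subrr add0r.
Qed.

(* Since the commutator with e^{(1)}_{-1,0} = t^{(1)}_{-1,0} is a derivation and
   k_{-1}(u) is invertible: [e^{(1)}_{-1,0}, e_{-1,0}(u)] = e_{-1,0}(u)^2 + e_{-1,1}(u). *)
Lemma commutator_e1_E n : E 1%N * E n - E n * E 1%N = ser_mul E E n + G n.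
Proof.
rewrite E_coef1; set z := t (-1) 0 1%N.
have zK m : z * K m - K m * z = - ser_mul K E m.
  by rewrite -T11E -T12E commutator_t1_T11.
have zKE m : ser_mul (fun m => z * K m - K m * z) E m
    + ser_mul K (fun m => z * E m - E m * z) m = ser_mul K G m.
  by rewrite -ser_commutator_mul -T12E -T13E commutator_t1_T12.
apply: (ser_mul_cancel (x := fun m => z * E m - E m * z)
  (y := fun m => ser_mul E E m + G m) K_coef0) => m.
rewrite ser_mulDr -zKE (ser_mul_extl zK) ser_mulNl ser_mulA.
by rewrite addNKr.
Qed.

(* At v = u - 1, the entry ((-1,-1),(0,-1)) of the RTT relation gives
   t_{-1,0}(u-1) t_{-1,-1}(u) = t_{-1,-1}(u-1) t_{-1,0}(u). *)
Lemma rtt_m1_T11_T12 n :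
  ser_mul (ser_shift (-1) T12) T11 n = ser_mul (ser_shift (-1) T11) T12 n.
Proof.
have := @rtt_diag _ _ _ HR (-1) (@central_m1 _ A) (-1) 0 (-1) (-1) erefl erefl erefl erefl n.
rewrite !mul0r subrr scaler0 subr0 => rel.
apply/subr0_eq/(eq_of_scaled (a := 2%:R) rel).
lincomb_eq (ser_mul T12 (ser_shift (-1) T11) n) (ser_mul (ser_shift (-1) T11) T12 n)
  (ser_mul (ser_shift (-1) T12) T11 n) (ser_mul (ser_shift (-1) T12) T11 n)
  (ser_mul (ser_shift (-1) T12) T11 n) (ser_mul (ser_shift (-1) T12) T11 n).
all: by field; exact: nat2_neq0.
Qed.

(* At v = u - 1, the entries ((-1,-1),(0,0)) and ((-1,-1),(-1,1)) give
   t_{-1,-1}(u-1) t_{-1,1}(u) = -1/2 t_{-1,0}(u-1) t_{-1,0}(u). *)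
Lemma rtt_m1_T11_T13 n :
  ser_mul (ser_shift (-1) T11) T13 n = - h *: ser_mul (ser_shift (-1) T12) T12 n.
Proof.
have := @rtt_diag _ _ _ HR (-1) (@central_m1 _ A) (-1) (-1) (-1) 1 erefl erefl erefl erefl n.
have := @rtt_diag _ _ _ HR (-1) (@central_m1 _ A) (-1) 0 (-1) 0 erefl erefl erefl erefl n.
rewrite /= /idx3 !big_cons !big_nil /= !mul0r !mul1r !addr0 => relS relP.
apply/subr0_eq/(eq_of_scaled_comb (a := 1) (b := - (3%:R / 2%:R)) relP relS).
lincomb_eq (ser_mul T11 (ser_shift (-1) T13) n) (ser_mul T12 (ser_shift (-1) T12) n)
  (ser_mul (ser_shift (-1) T13) T11 n) (ser_mul (ser_shift (-1) T12) T12 n)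
  (ser_mul (ser_shift (-1) T11) T13 n) (ser_mul (ser_shift (-1) T11) T13 n).
all: by field; exact: nat2_neq0.
Qed.

Lemma G_square n : G n = - h *: ser_mul E E n.
Proof.
have central_mh : central_scalar A (- h) by apply/central_opp/central_half.
have T13E' m : T13 m = - h *: ser_mul T12 E m.
  apply: (ser_mul_cancel (K := ser_shift (-1) T11) (x := T13)
    (y := fun m => - h *: ser_mul T12 E m)); first by rewrite ser_shift_coef0.
  move=> {}m; rewrite rtt_m1_T11_T13 ser_mulZr //; congr (_ *: _).
  rewrite (ser_mul_extr T12E) -ser_mulA -[RHS]ser_mulA.
  apply: ser_mul_extl => x.
  by rewrite -rtt_m1_T11_T12; apply: ser_mul_extr => y; rewrite T11E.
apply: (ser_mul_cancel (x := G) (y := fun m => - h *: ser_mul E E m) K_coef0) => m.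
rewrite ser_mulZr // -T13E T13E' -ser_mulA; congr (_ *: _).
by apply: ser_mul_extl => x; exact: T12E.
Qed.

(* At v = u + 1/2, entries ((-1,-1),(-1,l)) for l = -1, 0, 1 of the RTT relation. *)
Lemma rtt_half_T11 n : ser_mul T11 (sh T11) n = ser_mul (sh T11) T11 n.
Proof.
have := @rtt_diag _ _ _ HR h central_half (-1) (-1) (-1) (-1) erefl erefl erefl erefl n.
rewrite /= !mul0r subrr scaler0 subr0 => rel.
apply/subr0_eq/(eq_of_scaled (a := 2%:R / 3%:R) rel).
lincomb_eq (ser_mul T11 (sh T11) n) (ser_mul (sh T11) T11 n) (ser_mul (sh T11) T11 n)
  (ser_mul (sh T11) T11 n) (ser_mul (sh T11) T11 n) (ser_mul (sh T11) T11 n).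
all: by field; rewrite ?mulf_neq0 ?nat2_neq0 ?nat3_neq0.
Qed.

Lemma rtt_half_T12 n :
  3%:R *: ser_mul T11 (sh T12) n = ser_mul (sh T12) T11 n + 2%:R *: ser_mul (sh T11) T12 n.
Proof.
have := @rtt_diag _ _ _ HR h central_half (-1) (-1) (-1) 0 erefl erefl erefl erefl n.
rewrite /= !mul0r subrr scaler0 subr0 => rel.
apply/subr0_eq/(eq_of_scaled (a := 2%:R) rel).
lincomb_eq (ser_mul T11 (sh T12) n) (ser_mul (sh T12) T11 n) (ser_mul (sh T11) T12 n)
  (ser_mul (sh T11) T12 n) (ser_mul (sh T11) T12 n) (ser_mul (sh T11) T12 n).
all: by field; rewrite ?mulf_neq0 ?nat2_neq0 ?nat3_neq0.
Qed.

Lemma rtt_half_T13 n :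
  3%:R *: ser_mul T11 (sh T13) n = ser_mul (sh T11) T13 n - ser_mul (sh T12) T12 n.
Proof.
have := @rtt_diag _ _ _ HR h central_half (-1) (-1) (-1) 1 erefl erefl erefl erefl n.
rewrite /= /idx3 !big_cons !big_nil /= !mul0r !mul1r !addr0 => rel.
apply/subr0_eq/(eq_of_scaled (a := 2%:R) rel).
lincomb_eq (ser_mul T11 (sh T13) n) (ser_mul (sh T13) T11 n) (ser_mul (sh T11) T13 n)
  (ser_mul (sh T12) T12 n) (ser_mul (sh T12) T12 n) (ser_mul (sh T12) T12 n).
all: by field; rewrite ?mulf_neq0 ?nat2_neq0 ?nat3_neq0.
Qed.

Local Notation KK := (ser_mul K (sh K)).

Lemma shK_K n : ser_mul (sh K) K n = KK n.
Proof.
rewrite (ser_mul_extl (fun m => esym (shT11E m))) (ser_mul_extr (fun m => esym (T11E m))).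
rewrite -rtt_half_T11.
by rewrite (ser_mul_extl T11E) (ser_mul_extr shT11E).
Qed.

Lemma shE_K n : ser_mul (ser_mul (sh K) (sh E)) K n
  = 3%:R *: ser_mul KK (sh E) n - 2%:R *: ser_mul KK E n.
Proof.
have := rtt_half_T12 n.
rewrite (ser_mul_extl T11E) (ser_mul_extr shT12E) (ser_mul_extl shT12E).
rewrite (ser_mul_extr T11E) (ser_mul_extl shT11E) (ser_mul_extr T12E).
rewrite -ser_mulA -[ser_mul (sh K) (ser_mul K E) n]ser_mulA (ser_mul_extl shK_K).
by move=> ->; rewrite addrK.
Qed.

(* Cancelling k(u) k(u+1/2):
   3 e_{-1,1}(u+1/2) - e_{-1,1}(u) + 3 e_{-1,0}(u+1/2) e_{-1,0}(u) - 2 e_{-1,0}(u)^2 = 0. *)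
Lemma shG_relation n :
  3%:R *: sh G n - G n + 3%:R *: ser_mul (sh E) E n - 2%:R *: ser_mul E E n = 0.
Proof.
have shEKE m : ser_mul (ser_mul (sh K) (sh E)) (ser_mul K E) m
    = 3%:R *: ser_mul KK (ser_mul (sh E) E) m - 2%:R *: ser_mul KK (ser_mul E E) m.
  rewrite -ser_mulA (ser_mul_extl shE_K) ser_mulBl !ser_mulZl.
  by rewrite !ser_mulA.
have rel13 m : 3%:R *: ser_mul KK (sh G) m = ser_mul KK G m
    - (3%:R *: ser_mul KK (ser_mul (sh E) E) m - 2%:R *: ser_mul KK (ser_mul E E) m).
  have := rtt_half_T13 m.
  rewrite (ser_mul_extl T11E) (ser_mul_extr shT13E) (ser_mul_extl shT11E).
  rewrite (ser_mul_extr T13E) (ser_mul_extl shT12E) (ser_mul_extr T12E) shEKE.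
  by rewrite -ser_mulA -[ser_mul (sh K) (ser_mul K G) m]ser_mulA (ser_mul_extl shK_K).
have KK0 : KK 0%N = 1 by rewrite ser_mul_coef0 K_coef0 ser_shift_coef0 K_coef0 mulr1.
apply: (ser_mul_eq0 (x := fun m => 3%:R *: sh G m - G m
  + 3%:R *: ser_mul (sh E) E m - 2%:R *: ser_mul E E m) KK0) => m.
rewrite ser_mulBr ser_mulDr ser_mulBr !ser_mulZr; try exact: central_nat.
rewrite rel13.
set a := ser_mul KK G m; set b := ser_mul KK (ser_mul (sh E) E) m.
set c := ser_mul KK (ser_mul E E) m.
by lincomb_eq a b c c c c; ring.
Qed.

End FirstRow.

Theorem lemma3p10 (F : fieldType) (A : lalgType F)
  (charF0 : [pchar F] =i pred0)
  (t : int -> int -> nat -> A) (k : int -> nat -> A)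
  (e f : int -> int -> nat -> A) :
  RTT_rel t -> unitary_rel t -> gauss_decomp t k e f ->
  forall n : nat,
    e (-1) 0 1%N * e (-1) 0 n - e (-1) 0 n * e (-1) 0 1%N
    = ser_mul (e (-1) 0) (e (-1) 0) n
      - ser_mul (ser_shift (2%:R^-1) (e (-1) 0)) (e (-1) 0) n
      - ser_shift (2%:R^-1) (e (-1) 1) n.
Proof.
move=> HR _ HG n.
rewrite (commutator_e1_E HR HG) (G_square charF0 HR HG).
have := shG_relation charF0 HR HG n; rewrite (G_square charF0 HR HG) => rel.
apply/subr0_eq/(eq_of_scaled (a := 3%:R^-1) rel).
set ee := ser_mul (e (-1) 0) (e (-1) 0) n.
set see := ser_mul (ser_shift 2%:R^-1 (e (-1) 0)) (e (-1) 0) n.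
set sg := ser_shift 2%:R^-1 (e (-1) 1) n.
lincomb_eq ee see sg sg sg sg.
all: by field; rewrite ?mulf_neq0 ?(nat2_neq0 charF0) ?(nat3_neq0 charF0).
Qed.
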